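(* Let $d,n,k\ge1$, let $x_0,x_1,\dots,x_n\in\mathbb{R}^d$, and let $T_1,\dots,T_k:\mathbb{R}^d\to\mathbb{R}^d$ be maps. Define $V=\operatorname{span}\{T_1(x_0)-x_0,\dots,T_k(x_0)-x_0\}$, and for each $i\in\{1,\dots,n\}$ let $z_i$ be the orthogonal projection of $x_i-x_0$ onto $V^\perp$. Let $M^*$ be the minimizer of $$\min_M \tfrac12\|M\|^2 \quad\text{subject to}\quad z_i^T M z_i\ge 2\ \ \forall i\in\{1,\dots,n\},\quad M\succeq 0.$$ Then $M^*$ is the minimizer of $$\min_M \tfrac12\|M\|^2 \quad\text{subject to}\quad \begin{cases}(x_i-x_0)^T M (x_i-x_0)\ge 2 & \forall i\in\{1,\dots,n\},\\ (T_j(x_0)-x_0)^T M (T_j(x_0)-x_0)=0 & \forall j\in\{1,\dots,k\},\\ M\succeq 0.\end{cases}$$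
   Context: $M$ ranges over real $d\times d$ matrices; $\|M\|$ is the Frobenius norm, $\|M\|^2=\sum_{ij}M_{ij}^2$; $M\succeq 0$ means $M$ is symmetric positive semidefinite. $V^\perp$ is the orthogonal complement of $V$ in $\mathbb{R}^d$ with respect to the standard inner product. *)

From HB Require Import structures.
From mathcomp Require Import all_boot all_order all_algebra.
From mathcomp Require Import reals.
Set Implicit Arguments. Unset Strict Implicit. Unset Printing Implicit Defensive.
Import Order.TTheory GRing.Theory Num.Theory.
Local Open Scope ring_scope.

Section Defs.
Variables (R : realType) (d : nat).

Definition dotp (u v : 'rV[R]_d) : R := (u *m v^T) 0 0.

Definition qform (M : 'M[R]_d) (u : 'rV[R]_d) : R := (u *m M *m u^T) 0 0.

Definition frob2 (M : 'M[R]_d) : R := \sum_(i < d) \sum_(j < d) M i j ^+ 2.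

Definition half_frob2 (M : 'M[R]_d) : R := frob2 M / 2.

Definition psd (M : 'M[R]_d) : Prop :=
  M^T = M /\ forall u : 'rV[R]_d, 0 <= qform M u.

Definition span_of (k : nat) (vs : 'I_k -> 'rV[R]_d) (v : 'rV[R]_d) : Prop :=
  (v <= \matrix_(j < k) vs j)%MS.

Definition orth_compl (W : 'rV[R]_d -> Prop) (u : 'rV[R]_d) : Prop :=
  forall w, W w -> dotp u w = 0.

Definition is_orth_proj (W : 'rV[R]_d -> Prop) (v z : 'rV[R]_d) : Prop :=
  W z /\ forall w, W w -> dotp (v - z) w = 0.

Definition is_minimizer (F : 'M[R]_d -> Prop) (f : 'M[R]_d -> R) (M : 'M[R]_d) : Prop :=
  F M /\ forall M', F M' -> f M <= f M'.

Definition is_unique_minimizer (F : 'M[R]_d -> Prop) (f : 'M[R]_d -> R) (M : 'M[R]_d) : Prop :=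
  is_minimizer F f M /\ forall M', is_minimizer F f M' -> M' = M.

End Defs.

(* Every matrix feasible for the second problem kills V: a PSD matrix with
   w^T M w = 0 satisfies M w = 0.  Hence on that set x_i - x_0 and z_i give the
   same quadratic form (they differ by an element of V), so the second feasible
   set is contained in the first.  Conversely, compressing M^* by the orthogonal
   projector P onto V^perp keeps it feasible for the first problem (P z_i = z_i)
   and does not increase the Frobenius norm; by strict convexity of the norm the
   minimizer is unique, so P M^* P = M^*, i.e. M^* kills V and is feasible for
   the second problem.  Uniqueness there again follows from strict convexity. *)
From HB Require Import structures.
From mathcomp Require Import all_boot all_order all_algebra.
From mathcomp Require Import reals.
From mathcomp Require Import ring lra.
Set Implicit Arguments. Unset Strict Implicit. Unset Printing Implicit Defensive.
Import Order.TTheory GRing.Theory Num.Theory.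
Local Open Scope ring_scope.

Lemma quadratic_ge0_linear_eq0 (R : realFieldType) (a b : R) :
  0 <= b -> (forall t, 0 <= 2 * t * a + t ^+ 2 * b) -> a = 0.
Proof.
move=> b_ge0 H; set t := - a / (b + 1).
have ht : t * (b + 1) = - a by rewrite /t mulrVK ?unitfE //; lra.
have := H t; nra.
Qed.

Section QuadraticForms.
Variables (R : realType) (d : nat).
Implicit Types (M A B : 'M[R]_d) (u v : 'rV[R]_d).

Lemma dotp_eq0 u : dotp u u = 0 -> u = 0.
Proof.
rewrite /dotp mxE (eq_bigr (fun i => u 0 i ^+ 2)) => [uu0|i _]; last first.
  by rewrite mxE expr2.
apply/rowP => j; rewrite mxE; apply/eqP; rewrite -sqrf_eq0; apply/eqP.
by apply: (psumr_eq0P _ uu0) => // i _; exact: sqr_ge0.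
Qed.

Lemma mx11D (A B : 'M[R]_1) : (A + B) 0 0 = A 0 0 + B 0 0.
Proof. by rewrite mxE. Qed.

Lemma mx11Z (c : R) (A : 'M[R]_1) : (c *: A) 0 0 = c * A 0 0.
Proof. by rewrite mxE. Qed.

Lemma mx11T (A : 'M[R]_1) : A^T 0 0 = A 0 0.
Proof. by rewrite mxE. Qed.

Lemma bilin_sym M u v : M^T = M -> (u *m M *m v^T) 0 0 = (v *m M *m u^T) 0 0.
Proof. by move=> MT; rewrite -mx11T !trmx_mul trmxK MT mulmxA. Qed.

Lemma qformD A B u : qform (A + B) u = qform A u + qform B u.
Proof. by rewrite /qform mulmxDr mulmxDl mx11D. Qed.

Lemma qformZ (c : R) M u : qform (c *: M) u = c * qform M u.
Proof. by rewrite /qform -scalemxAr -scalemxAl mx11Z. Qed.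

Lemma qform_scaler (c : R) M u : qform M (c *: u) = c ^+ 2 * qform M u.
Proof.
by rewrite /qform linearZ /= -scalemxAr -!scalemxAl !mx11Z mulrA -expr2.
Qed.

Lemma qform_addr M u v : M^T = M ->
  qform M (u + v) = qform M u + 2 * (u *m M *m v^T) 0 0 + qform M v.
Proof.
move=> MT; rewrite /qform linearD /= !mulmxDl !mulmxDr !mx11D.
by rewrite (bilin_sym v u MT); ring.
Qed.

Lemma qform_addr_ker M u v : M^T = M -> v *m M = 0 -> qform M (u + v) = qform M u.
Proof.
move=> MT vM0; rewrite qform_addr // (bilin_sym u v MT) /qform vM0 !mul0mx.
by rewrite [(0 : 'M[R]_1) 0 0]mxE mulr0 !addr0.
Qed.

(* Expanding 0 <= qform M (v + t u) in t forces the cross term v M u^T to vanish. *)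
Lemma psd_qform_eq0 M v : psd M -> qform M v = 0 -> v *m M = 0.
Proof.
case=> MT M_ge0 Mv0.
have cross0 u : (v *m M *m u^T) 0 0 = 0.
  apply: (quadratic_ge0_linear_eq0 (M_ge0 u)) => t.
  have := M_ge0 (v + t *: u).
  rewrite qform_addr // Mv0 qform_scaler linearZ /= -scalemxAr mx11Z.
  nra.
exact/dotp_eq0/cross0.
Qed.

Lemma psdD A B : psd A -> psd B -> psd (A + B).
Proof.
case=> AT A_ge0 [BT B_ge0]; split; first by rewrite linearD /= AT BT.
by move=> u; rewrite qformD addr_ge0.
Qed.

Lemma psdZ (c : R) M : 0 <= c -> psd M -> psd (c *: M).
Proof.
move=> c_ge0 [MT M_ge0]; split; first by rewrite linearZ /= MT.
by move=> u; rewrite qformZ mulr_ge0.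
Qed.

End QuadraticForms.

Section Frobenius.
Variables (R : realType) (d : nat).
Implicit Types (M A B P : 'M[R]_d).

Lemma frob2_ge0 A : 0 <= frob2 A.
Proof. by apply: sumr_ge0 => i _; apply: sumr_ge0 => j _; exact: sqr_ge0. Qed.

Lemma frob2_eq0 A : frob2 A = 0 -> A = 0.
Proof.
move=> A0; apply/matrixP => i j; rewrite mxE; apply/eqP; rewrite -sqrf_eq0.
have row0 := psumr_eq0P (fun i _ => sumr_ge0 _ (fun j _ => sqr_ge0 (A i j))) A0.
by apply/eqP/(psumr_eq0P _ (row0 i isT)) => // k _; exact: sqr_ge0.
Qed.

Lemma frob2_trace A : frob2 A = \tr (A *m A^T).
Proof.
rewrite /frob2 /mxtrace; apply: eq_bigr => i _; rewrite mxE.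
by apply: eq_bigr => j _; rewrite !mxE expr2.
Qed.

Lemma frob2_parallelogram A B :
  4 * frob2 (2^-1 *: (A + B)) + frob2 (A - B) = 2 * frob2 A + 2 * frob2 B.
Proof.
rewrite /frob2 !mulr_sumr -!big_split /=; apply: eq_bigr => i _.
by rewrite !mulr_sumr -!big_split /=; apply: eq_bigr => j _; rewrite !mxE; field.
Qed.

(* Strict convexity of the squared norm: the midpoint of two distinct
   minimizers would have a strictly smaller norm. *)
Lemma half_frob2_minimizer_eq (F : 'M[R]_d -> Prop) A B :
  (forall A B, F A -> F B -> F (2^-1 *: (A + B))) ->
  is_minimizer F (@half_frob2 R d) A -> F B -> half_frob2 B <= half_frob2 A ->
  B = A.
Proof.
move=> Fmid [FA Amin] FB; rewrite /half_frob2 => BleA.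
have := Amin _ (Fmid _ _ FA FB); rewrite /half_frob2 => Ale_mid.
have := frob2_parallelogram A B; have := frob2_ge0 (A - B) => AB_ge0 parallel.
have /frob2_eq0/eqP : frob2 (A - B) = 0 by lra.
by rewrite subr_eq0 => /eqP.
Qed.

(* With N := P M P one has <M, N> = <N, N> = tr(MPMP), so M = N + (M - N) is an
   orthogonal decomposition. *)
Lemma frob2_compress M P : M^T = M -> P^T = P -> P *m P = P ->
  frob2 (P *m M *m P) <= frob2 M.
Proof.
move=> MT PT PP; set N := P *m M *m P.
have NT : N^T = N by rewrite /N !trmx_mul MT PT mulmxA.
set t := \tr (M *m P *m M *m P).
have trNN : \tr (N *m N) = t.
  rewrite /N !mulmxA -(mulmxA (P *m M) P P) PP -!mulmxA mxtrace_mulC !mulmxA.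
  by rewrite -(mulmxA (M *m P *m M) P P) PP.
have trMN : \tr (M *m N) = t by rewrite /N /t !mulmxA.
have trNM : \tr (N *m M) = t by rewrite /N mxtrace_mulC /t !mulmxA.
have : frob2 M = frob2 N + frob2 (M - N).
  rewrite !frob2_trace MT NT linearB /= NT mulmxBl !mulmxBr !linearB /=.
  by rewrite MT trNN trMN trNM; ring.
have := frob2_ge0 (M - N); lra.
Qed.

End Frobenius.

Section ComplementProjector.
Variables (R : realType) (d k : nat) (W : 'M[R]_(k, d)).
Implicit Types (u v : 'rV[R]_d).

Local Notation B := (row_base W).
Local Notation Q := (B^T *m invmx (B *m B^T) *m B).

Definition compl_proj : 'M[R]_d := 1%:M - Q.

Lemma row_base_sub : (B <= W)%MS.
Proof. by rewrite eq_row_base. Qed.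

Lemma sub_row_base : (W <= B)%MS.
Proof. by rewrite eq_row_base. Qed.

Lemma gram_row_base_unit : B *m B^T \in unitmx.
Proof.
rewrite -row_free_unit; apply: inj_row_free => v vG0.
have vB0 : v *m B = 0.
  by apply: dotp_eq0; rewrite /dotp trmx_mul mulmxA -(mulmxA v) vG0 mul0mx mxE.
by apply: (row_free_inj (row_base_free W)); rewrite /= vB0 mul0mx.
Qed.

Lemma row_base_mulQ : B *m Q = B.
Proof. by rewrite !mulmxA (mulmxV gram_row_base_unit) mul1mx. Qed.

Lemma compl_proj_sym : compl_proj^T = compl_proj.
Proof.
rewrite /compl_proj linearB /= trmx1 (trmx_mul (B^T *m _) B) (trmx_mul B^T).
by rewrite trmx_inv (trmx_mul B) !trmxK mulmxA.
Qed.

Lemma compl_proj_idem : compl_proj *m compl_proj = compl_proj.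
Proof.
rewrite /compl_proj mulmxBl !mulmxBr !mul1mx !mulmx1.
by rewrite -[Q *m Q]mulmxA row_base_mulQ subrr subr0.
Qed.

Lemma row_base_mul_compl_proj : B *m compl_proj = 0.
Proof. by rewrite /compl_proj mulmxBr mulmx1 row_base_mulQ subrr. Qed.

Lemma mul_compl_proj : W *m compl_proj = 0.
Proof.
have -> : W *m compl_proj = W *m pinvmx B *m (B *m compl_proj).
  by rewrite mulmxA (mulmxKpV sub_row_base).
by rewrite row_base_mul_compl_proj mulmx0.
Qed.

Lemma dotp_compl_proj u w : (w <= W)%MS -> dotp (u *m compl_proj) w = 0.
Proof.
move=> wW; have wB := submx_trans wW sub_row_base.
rewrite /dotp -(mulmxKpV wB) trmx_mul mulmxA -(mulmxA u).
by rewrite -compl_proj_sym -trmx_mul row_base_mul_compl_proj trmx0 mulmx0 mul0mx mxE.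
Qed.

Lemma compl_proj_id u : orth_compl (fun w => (w <= W)%MS) u -> u *m compl_proj = u.
Proof.
move=> u_orth; have uB0 : u *m B^T = 0.
  apply/rowP => r; rewrite [RHS]mxE -(u_orth (row r B)).
    by rewrite /dotp !mxE; apply: eq_bigr => s _; rewrite !mxE.
  exact: submx_trans (row_sub r B) row_base_sub.
by rewrite /compl_proj mulmxBr mulmx1 !mulmxA uB0 !mul0mx subr0.
Qed.

Lemma compl_proj_eq0 u : u *m compl_proj = 0 -> (u <= W)%MS.
Proof.
rewrite /compl_proj mulmxBr mulmx1 => /eqP; rewrite subr_eq0 => /eqP ->.
by rewrite mulmxA (submx_trans (submxMl _ _) row_base_sub).
Qed.

(* The projection of u onto W^perp is orthogonal to u, hence to itself. *)
Lemma orth_compl2_sub u :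
  orth_compl (orth_compl (fun w => (w <= W)%MS)) u -> (u <= W)%MS.
Proof.
move=> u_orth; apply/compl_proj_eq0/dotp_eq0.
have := u_orth (u *m compl_proj) (fun w wW => dotp_compl_proj u wW).
rewrite /dotp !trmx_mul compl_proj_sym !mulmxA.
by rewrite -(mulmxA u compl_proj compl_proj) compl_proj_idem.
Qed.

End ComplementProjector.

Definition proj_feasible (R : realType) (d n : nat) (z : 'I_n -> 'rV[R]_d)
    (M : 'M[R]_d) : Prop :=
  (forall i, qform M (z i) >= 2) /\ psd M.

Definition constr_feasible (R : realType) (d n k : nat) (y : 'I_n -> 'rV[R]_d)
    (w : 'I_k -> 'rV[R]_d) (M : 'M[R]_d) : Prop :=
  (forall i, qform M (y i) >= 2) /\ (forall j, qform M (w j) = 0) /\ psd M.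

Section Reduction.
Variables (R : realType) (d n k : nat).
Variables (y z : 'I_n -> 'rV[R]_d) (w : 'I_k -> 'rV[R]_d).
Hypothesis proj_z : forall i, is_orth_proj (orth_compl (span_of w)) (y i) (z i).
Implicit Types M : 'M[R]_d.

Local Notation W := (\matrix_(j < k) w j).
Local Notation P := (compl_proj W).

Lemma span_mul_eq0 M : W *m M = 0 <-> forall j, w j *m M = 0.
Proof.
split=> [WM0 j | wM0]; last by apply/row_matrixP => j; rewrite row_mul rowK row0.
by have := congr1 (row j) WM0; rewrite row_mul rowK row0.
Qed.

Lemma proj_residual_sub i : (y i - z i <= W)%MS.
Proof. by apply: orth_compl2_sub; case: (proj_z i). Qed.

Lemma compl_proj_fixed i : z i *m P = z i.
Proof. by apply: compl_proj_id; case: (proj_z i). Qed.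

Lemma qform_proj_eq M i : M^T = M -> W *m M = 0 -> qform M (y i) = qform M (z i).
Proof.
move=> MT WM0; have /(submx_trans (proj_residual_sub i)) : (W <= kermx M)%MS.
  by rewrite sub_kermx WM0.
rewrite sub_kermx => /eqP resM0.
by rewrite -(qform_addr_ker (z i) MT resM0) addrC subrK.
Qed.

Lemma constr_proj_feasible M : constr_feasible y w M -> proj_feasible z M.
Proof.
case=> y_ge2 [w0 Mpsd]; split=> // i.
have /span_mul_eq0 WM0 j : w j *m M = 0 by exact: psd_qform_eq0.
by rewrite -(qform_proj_eq i Mpsd.1 WM0).
Qed.

Lemma proj_feasible_midpoint A B : proj_feasible z A -> proj_feasible z B ->
  proj_feasible z (2^-1 *: (A + B)).
Proof.
case=> A_ge2 Apsd [B_ge2 Bpsd]; split.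
  by move=> i; rewrite qformZ qformD; have := A_ge2 i; have := B_ge2 i; lra.
by apply: psdZ; [rewrite invr_ge0 | exact: psdD].
Qed.

Lemma proj_feasible_compress M : proj_feasible z M -> proj_feasible z (P *m M *m P).
Proof.
have qformP u : qform (P *m M *m P) u = qform M (u *m P).
  by rewrite /qform trmx_mul compl_proj_sym !mulmxA.
case=> M_ge2 [MT M_ge0]; split; first by move=> i; rewrite qformP compl_proj_fixed.
split; last by move=> u; rewrite qformP.
by rewrite !trmx_mul MT compl_proj_sym mulmxA.
Qed.

(* Compression by P is feasible and no longer, so by uniqueness it is M itself. *)
Lemma proj_minimizer_ker M :
  is_minimizer (proj_feasible z) (@half_frob2 R d) M -> W *m M = 0.
Proof.
move=> Mmin; have [[_ [MT _]] _] := Mmin.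
have PMP_M : P *m M *m P = M.
  apply: (half_frob2_minimizer_eq proj_feasible_midpoint Mmin).
    exact: proj_feasible_compress Mmin.1.
  rewrite /half_frob2 ler_pM2r ?invr_gt0 //.
  exact: frob2_compress MT (compl_proj_sym W) (compl_proj_idem W).
by rewrite -PMP_M !mulmxA mul_compl_proj !mul0mx.
Qed.

Lemma proj_minimizer_constr_feasible M :
  is_minimizer (proj_feasible z) (@half_frob2 R d) M -> constr_feasible y w M.
Proof.
move=> Mmin; have [[z_ge2 Mpsd] _] := Mmin.
have WM0 := proj_minimizer_ker Mmin; split.
  by move=> i; rewrite (qform_proj_eq i Mpsd.1 WM0).
split=> // j; have /span_mul_eq0 wM0 := WM0.
by rewrite /qform wM0 mul0mx mxE.
Qed.

End Reduction.

Theorem theorem3 (R : realType) (d n k : nat)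
  (hd : (0 < d)%N) (hn : (0 < n)%N) (hk : (0 < k)%N)
  (x0 : 'rV[R]_d) (x : 'I_n -> 'rV[R]_d)
  (T : 'I_k -> 'rV[R]_d -> 'rV[R]_d)
  (z : 'I_n -> 'rV[R]_d)
  (hz : forall i : 'I_n,
      is_orth_proj (orth_compl (span_of (fun j => T j x0 - x0))) (x i - x0) (z i))
  (Mstar : 'M[R]_d)
  (hM : is_minimizer
          (fun M => (forall i : 'I_n, qform M (z i) >= 2) /\ psd M)
          (@half_frob2 R d) Mstar) :
  is_unique_minimizer
    (fun M => (forall i : 'I_n, qform M (x i - x0) >= 2) /\
              (forall j : 'I_k, qform M (T j x0 - x0) = 0) /\ psd M)
    (@half_frob2 R d) Mstar.
Proof.
pose y i := x i - x0; pose w j := T j x0 - x0.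
have to_proj M : constr_feasible y w M -> proj_feasible z M.
  exact: (@constr_proj_feasible R d n k y z w hz).
have Mstar_feasible : constr_feasible y w Mstar.
  exact: (@proj_minimizer_constr_feasible R d n k y z w hz).
split; first by split=> // M /to_proj; exact: hM.2.
move=> M [/to_proj M_feasible M_le].
exact: half_frob2_minimizer_eq (@proj_feasible_midpoint R d n z) hM M_feasible
  (M_le _ Mstar_feasible).
Qed.
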